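(* Let $\mathcal{C}$ be a class of instances that is closed under homomorphic equivalence, and let $\mathcal{F}$ be a finite set of connected instances. Then $\mathcal{C}$ admits a left query algorithm over $\mathbb{N}$ of the form $(\mathcal{F},X)$ for some set $X$ if and only if $\mathcal{C}$ admits a left query algorithm over $\mathbb{B}$ of the form $(\mathcal{F},X')$ for some set $X'$.
   Context: A schema is a finite set of relation symbols, each with a positive arity. An instance $A$ over a schema $\sigma$ assigns to each $R\in\sigma$ of arity $r$ a finite $r$-ary relation $R^A$; its facts are the tuples in these relations, and $\mathrm{adom}(A)$ is the set of elements occurring in its facts. A homomorphism $h:A\to B$ is a map $h:\mathrm{adom}(A)\to\mathrm{adom}(B)$ preserving every relation; we write $A\to B$ if one exists. $A,B$ are homomorphically equivalent if $A\to B$ and $B\to A$. A class of instances is a collection of instances over a fixed schema closed under isomorphism; it is closed under homomorphic equivalence if $A\in\mathcal{C}$ and $A,B$ homomorphically equivalent imply $B\in\mathcal{C}$. $\hom_{\mathbb{N}}(A,B)$ is the number of homomorphisms $A\to B$; $\hom_{\mathbb{B}}(A,B)=1$ if $A\to B$ and $0$ otherwise. For $\mathcal{F}=\{F_1,\dots,F_k\}$, $\hom_K(\mathcal{F},A)=(\hom_K(F_i,A))_{i\le k}$. A left $k$-query algorithm over $K\in\{\mathbb{B},\mathbb{N}\}$ for $\mathcal{C}$ is a pair $(\mathcal{F},X)$ with $|\mathcal{F}|=k$ and $X$ a set of $k$-tuples over $K$ (no effectiveness required) such that for every instance $D$: $D\in\mathcal{C}$ iff $\hom_K(\mathcal{F},D)\in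 X$. An instance is connected if its incidence multigraph (bipartite, with parts $\mathrm{adom}(A)$ and the set of facts, an edge joining an element to a fact for each occurrence of the element in the fact) restricted to connectivity between elements is connected, i.e. any two elements of $\mathrm{adom}(A)$ are linked by a chain of facts consecutively sharing elements. *)

From mathcomp Require Import all_boot.
From Stdlib Require List.
Set Implicit Arguments. Unset Strict Implicit. Unset Printing Implicit Defensive.

Record schema := Schema {
  sym : finType;
  arity : sym -> nat;
  arity_pos : forall R, 0 < arity R }.

Notation fact s := {R : sym s & (arity R).-tuple nat}.

(* An instance: a finite set of facts (given by a list; duplicates and order
   are irrelevant for everything below). Every finite instance is isomorphic
   to one whose elements are natural numbers. *)
Record instance (s : schema) := Instance { facts : seq (fact s) }.

Section Defs.
Variable s : schema.
Implicit Types A B D : instance s.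

Definition adom A : seq nat :=
  undup (flatten [seq tval (tagged f) | f : fact s <- facts A]).

Definition adomT A : finType := seq_sub (adom A).

Definition ext A B (g : {ffun adomT A -> adomT B}) (x : nat) : nat :=
  match (insub x : option (adomT A)) with
  | Some y => val (g y)
  | None => x
  end.

Definition is_hom A B (g : {ffun adomT A -> adomT B}) : bool :=
  all (fun f : fact s => (existT _ (tag f) (map_tuple (ext g) (tagged f)) : fact s)
                          \in facts B) (facts A).

Definition homN A B : nat := #|[pred g : {ffun adomT A -> adomT B} | is_hom g]|.

Definition homB A B : bool := [exists g : {ffun adomT A -> adomT B}, is_hom g].

Definition hom_equiv A B : Prop := homB A B /\ homB B A.

Definition closed_hom_equiv (C : instance s -> Prop) : Prop :=
  forall A B, C A -> hom_equiv A B -> C B.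

Definition share_fact A : rel (adomT A) :=
  fun x y => has (fun f : fact s => (val x \in tval (tagged f)) && (val y \in tval (tagged f)))
                 (facts A).

Definition connected A : Prop := forall x y : adomT A, connect (@share_fact A) x y.

Definition homN_vec (F : seq (instance s)) D : seq nat := [seq homN Fi D | Fi <- F].
Definition homB_vec (F : seq (instance s)) D : seq bool := [seq homB Fi D | Fi <- F].

Definition left_qa_N (C : instance s -> Prop) (F : seq (instance s))
  (X : seq nat -> Prop) : Prop := forall D, C D <-> X (homN_vec F D).

Definition left_qa_B (C : instance s -> Prop) (F : seq (instance s))
  (X : seq bool -> Prop) : Prop := forall D, C D <-> X (homB_vec F D).

End Defs.

(* Direction B => N is immediate: hom_B(F_i, D) = [hom_N(F_i, D) > 0].
   For N => B we accept a Boolean vector iff it is the hom_B-vector of some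
   member of C; the point is that two instances D, D' with the same
   hom_B-vector can be replaced by homomorphically equivalent instances G, G'
   with the same hom_N-vector (lemma equalize_counts).  Writing
   a_i = hom_N(F_i, D) and b_i = hom_N(F_i, D') (so a_i = 0 iff b_i = 0),
   we take G = (L+1) D + U(D, D') and G' = (L+1) D' + W(D, D') where U, W are
   terms in a, b all of whose monomials are divisible by ab, chosen so that
   (L+1) a_i + U(a_i, b_i) = (L+1) b_i + W(a_i, b_i) for every i. *)

From mathcomp Require Import all_boot zify.
From Stdlib Require List.
Set Implicit Arguments. Unset Strict Implicit. Unset Printing Implicit Defensive.

(* Terms built from 0, the product a*b, the variables a and b, sum and
   product. They are interpreted both as natural numbers (here) and as
   instances built from two instances D, D' (further below). *)
Inductive term := Tzero | Tab | Ta | Tb | Tadd of term & term | Tmul of term & term.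

Fixpoint teval (a b : nat) (t : term) : nat :=
  match t with
  | Tzero => 0 | Tab => a * b | Ta => a | Tb => b
  | Tadd t1 t2 => teval a b t1 + teval a b t2
  | Tmul t1 t2 => teval a b t1 * teval a b t2
  end.

(* A term is an ab-multiple when every monomial of it is (syntactically)
   divisible by a*b; such terms vanish at the origin, and their instances
   map into every instance receiving D or D'. *)
Fixpoint ab_multiple (t : term) : bool :=
  match t with
  | Tzero | Tab => true
  | Ta | Tb => false
  | Tadd t1 t2 => ab_multiple t1 && ab_multiple t2
  | Tmul t1 t2 => ab_multiple t1 || ab_multiple t2
  end.

Definition tscale (n : nat) (t : term) : term := iter n (Tadd t) Tzero.

Lemma teval_tscale a b n t : teval a b (tscale n t) = n * teval a b t.
Proof. by elim: n => //= n ->; rewrite mulSn. Qed.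

Lemma ab_multiple_tscale n t : ab_multiple t -> ab_multiple (tscale n t).
Proof. by move=> abt; elim: n => //= n ->; rewrite abt. Qed.

Lemma teval0_ab_multiple t : ab_multiple t -> teval 0 0 t = 0.
Proof.
elim: t => //= t1 IH1 t2 IH2; first by case/andP => /IH1 -> /IH2 ->.
by case/orP => [/IH1 ->|/IH2 ->]; rewrite ?muln0.
Qed.

(* (x1 - x2)(y1 - y2) <> 0, written without subtraction. *)
Lemma cross_sum_neq x1 x2 y1 y2 : x1 != x2 -> y1 != y2 ->
  x1 * y1 + x2 * y2 != x1 * y2 + x2 * y1.
Proof.
move=> /eqP nx /eqP ny; apply/eqP => E.
by case: (ltngtP x1 x2) nx => // ltx _; case: (ltngtP y1 y2) ny => // lty _; nia.
Qed.

Lemma separating_terms (p : nat * nat) (ps : seq (nat * nat)) : 0 < p.1 -> 0 < p.2 ->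
  exists P Q, [/\ ab_multiple P, ab_multiple Q, teval p.1 p.2 P != teval p.1 p.2 Q &
     forall q, q \in ps -> q != p -> teval q.1 q.2 P = teval q.1 q.2 Q].
Proof.
move=> p1 p2; elim: ps => [|q ps [P1 [Q1 [abP1 abQ1 neq1 eq1]]]].
  by exists Tab, Tzero; split => //=; rewrite -lt0n muln_gt0 p1.
have [qp | qp] := eqVneq q p.
  exists P1, Q1; split => // r; rewrite inE => /orP [/eqP -> | /eq1 //].
  by rewrite qp eqxx.
have [P2 [Q2 [abP2 abQ2 neq2 eq2]]] : exists P2 Q2, [/\ ab_multiple P2, ab_multiple Q2,
    teval p.1 p.2 P2 != teval p.1 p.2 Q2 & teval q.1 q.2 P2 = teval q.1 q.2 Q2].
  have [e1 | ne1] := eqVneq q.1 p.1.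
    have ne2 : q.2 != p.2.
      by apply: contraNneq qp => e2; rewrite [q]surjective_pairing e1 e2 -surjective_pairing.
    exists (Tmul Tab Tb), (tscale q.2 Tab).
    split; rewrite /= ?ab_multiple_tscale ?teval_tscale //; last by rewrite mulnC.
    by rewrite [_ * (_ * _)]mulnC eqn_pmul2l ?muln_gt0 ?p1 // eq_sym.
  exists (Tmul Tab Ta), (tscale q.1 Tab).
  split; rewrite /= ?ab_multiple_tscale ?teval_tscale //; last by rewrite mulnC.
  by rewrite [_ * (_ * _)]mulnC eqn_pmul2l ?muln_gt0 ?p1 // eq_sym.
(* the "product" of the two separations: (P1 - Q1)(P2 - Q2) *)
exists (Tadd (Tmul P1 P2) (Tmul Q1 Q2)), (Tadd (Tmul P1 Q2) (Tmul Q1 P2)).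
split=> /=; rewrite ?abP1 ?abQ1 //; first exact: cross_sum_neq.
move=> r; rewrite inE => /orP [/eqP -> _ | /eq1 e rp]; first by rewrite eq2 addnC.
by rewrite e // addnC.
Qed.

Lemma balance_with A B x y : x != y -> exists c m (swap : bool),
  0 < c /\ c * A + m * (if swap then y else x) = c * B + m * (if swap then x else y).
Proof.
move=> nxy; wlog ltxy : x y nxy / x < y.
  move=> wlog_lt; have [ltxy|ltyx|exy] := ltngtP x y; last by rewrite exy eqxx in nxy.
    exact: wlog_lt.
  have [c [m [swap [c0 E]]]] := wlog_lt y x (negbT (ltn_eqF ltyx)) ltyx.
  by exists c, m, (~~ swap); case: swap E.
have [AB | BA] := leqP A B.
  by exists (y - x), (B - A), true; split; [rewrite subn_gt0 | nia].
by exists (y - x), (A - B), false; split; [rewrite subn_gt0 | nia].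
Qed.

Lemma equalizing_terms (ps : seq (nat * nat)) :
  (forall p, p \in ps -> (p.1 == 0) = (p.2 == 0)) ->
  exists L U W, [/\ 0 < L, ab_multiple U, ab_multiple W &
    forall p, p \in ps -> L * p.1 + teval p.1 p.2 U = L * p.2 + teval p.1 p.2 W].
Proof.
(* Induction on the points: a new point p = (0, 0) is satisfied for free;
   otherwise the old solution is scaled by c and m times a pair of terms
   separating p from the old points is added, c and m balancing the defect
   at p. *)
elim: ps => [_|p ps IH zero_iff]; first by exists 1, Tzero, Tzero.
have [L [U [W [L0 abU abW E]]]] : exists L U W, [/\ 0 < L, ab_multiple U, ab_multiple W &
    forall q, q \in ps -> L * q.1 + teval q.1 q.2 U = L * q.2 + teval q.1 q.2 W].
  by apply: IH => q qps; apply: zero_iff; rewrite inE qps orbT.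
have {zero_iff} := zero_iff p (mem_head _ _).
have [p1 | p1] := posnP p.1 => [/esym/eqP p2 | p2].
  exists L, U, W; split => // q; rewrite inE => /orP [/eqP -> | /E //].
  by rewrite p1 p2 !teval0_ab_multiple.
have {}p2 : 0 < p.2 by rewrite lt0n -p2.
have [P [Q [abP abQ nPQ EPQ]]] := separating_terms ps p1 p2.
have [c [m [swap [c0 Ec]]]] :=
  balance_with (L * p.1 + teval p.1 p.2 U) (L * p.2 + teval p.1 p.2 W) nPQ.
pose P' := if swap then Q else P; pose Q' := if swap then P else Q.
exists (c * L), (Tadd (tscale c U) (tscale m P')), (Tadd (tscale c W) (tscale m Q')).
split; rewrite /= ?muln_gt0 ?c0 ?L0 ?ab_multiple_tscale //; try by rewrite /P' /Q'; case: (swap).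
move=> q; rewrite inE /= !teval_tscale !addnA -!mulnA -!mulnDr.
have [-> _ | qp /= qin] := eqVneq q p; first by rewrite /P' /Q'; case: (swap) Ec.
have -> : teval q.1 q.2 P' = teval q.1 q.2 Q' by rewrite /P' /Q'; case: (swap); rewrite EPQ.
by rewrite (E q qin).
Qed.

Section Homomorphisms.
Variable s : schema.
Implicit Types A B T X Y : instance s.

Definition raw_fact (f : fact s) : sym s * seq nat := (tag f, tval (tagged f)).

Lemma raw_fact_inj : injective raw_fact.
Proof. by case=> R1 t1 [R2 t2] [/= eR et]; subst R2; congr existT; apply: val_inj. Qed.

Definition raw_facts A : seq (sym s * seq nat) := map raw_fact (facts A).

Lemma raw_facts_arity A p : p \in raw_facts A -> size p.2 = arity p.1.
Proof. by case/mapP=> f _ ->; rewrite /= size_tuple. Qed.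

Lemma raw_fact_nonempty A p : p \in raw_facts A -> exists x, x \in p.2.
Proof.
move=> pA; have := arity_pos p.1; rewrite -(raw_facts_arity pA).
by case: p.2 => // x l _; exists x; rewrite mem_head.
Qed.

Definition is_homfun A B (h : nat -> nat) : bool :=
  all (fun p => (p.1, map h p.2) \in raw_facts B) (raw_facts A).

Lemma is_homfunP A B h :
  reflect (forall p, p \in raw_facts A -> (p.1, map h p.2) \in raw_facts B) (is_homfun A B h).
Proof. exact: allP. Qed.

Lemma is_hom_ext A B (g : {ffun adomT A -> adomT B}) : is_hom g = is_homfun A B (ext g).
Proof. by rewrite /is_hom /is_homfun all_map; apply: eq_all => f; rewrite /= -(mem_map raw_fact_inj). Qed.

Lemma mem_adom A x : (x \in adom A) = has (fun p => x \in p.2) (raw_facts A).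
Proof.
rewrite /adom /raw_facts mem_undup has_map; apply/flattenP/hasP => [[l /mapP [f fA ->] xf]|[f fA xf]].
  by exists f.
by exists (tval (tagged f)); [apply: map_f | apply: xf].
Qed.

Lemma raw_facts_adom A p x : p \in raw_facts A -> x \in p.2 -> x \in adom A.
Proof. by move=> pA xp; rewrite mem_adom; apply/hasP; exists p. Qed.

Lemma eq_is_homfun A B h1 h2 : {in adom A, h1 =1 h2} -> is_homfun A B h1 = is_homfun A B h2.
Proof.
move=> e12; apply: eq_in_all => p pA.
suff -> : map h1 p.2 = map h2 p.2 by [].
by apply/eq_in_map => x xp; apply/e12/(raw_facts_adom pA).
Qed.

Lemma is_homfun_adom A B h x : is_homfun A B h -> x \in adom A -> h x \in adom B.
Proof.
move=> /is_homfunP hAB; rewrite mem_adom => /hasP [p pA xp].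
by apply: (raw_facts_adom (hAB p pA)); rewrite map_f.
Qed.

Lemma is_homfun_id A : is_homfun A A id.
Proof. by apply/is_homfunP => p pA; rewrite map_id -surjective_pairing. Qed.

Lemma is_homfun_comp A B T h k :
  is_homfun A B h -> is_homfun B T k -> is_homfun A T (k \o h).
Proof.
move=> /is_homfunP hAB /is_homfunP kBT; apply/is_homfunP => p pA.
by rewrite map_comp; apply: (kBT _ (hAB _ pA)).
Qed.

(* To count homomorphisms we record them as tables: the list of their values
   along adom A; table A l reads such a list back as a function. *)
Definition table A (l : seq nat) (x : nat) : nat := nth 0 l (index x (adom A)).

Lemma table_map A (f : nat -> nat) l x : size l = size (adom A) -> x \in adom A ->
  table A (map f l) x = f (table A l x).
Proof. by move=> sz xA; rewrite /table (nth_map 0) // sz index_mem. Qed.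

Lemma table_of_fun A h x : x \in adom A -> table A (map h (adom A)) x = h x.
Proof. by move=> xA; rewrite /table (nth_map 0) ?index_mem // nth_index. Qed.

Lemma map_table A l : size l = size (adom A) -> map (table A l) (adom A) = l.
Proof.
move=> sz; apply: (eq_from_nth (x0 := 0)); rewrite size_map // => i lt_i.
by rewrite (nth_map 0) // /table index_uniq ?undup_uniq.
Qed.

Definition is_hom_table A B (l : seq nat) : bool :=
  (size l == size (adom A)) && is_homfun A B (table A l).

Lemma is_hom_table_size A B l : is_hom_table A B l -> size l = size (adom A).
Proof. by case/andP => /eqP. Qed.

Lemma is_hom_table_fun A B h : is_homfun A B h -> is_hom_table A B (map h (adom A)).
Proof.
move=> hAB; rewrite /is_hom_table size_map eqxx /=.
by rewrite (eq_is_homfun _ (@table_of_fun A h)).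
Qed.

Lemma is_hom_table_post A B l f : size l = size (adom A) ->
  is_homfun A B (f \o table A l) -> is_hom_table A B (map f l).
Proof.
move=> sz hAB; rewrite /is_hom_table size_map sz eqxx /=.
by rewrite (eq_is_homfun _ (fun x xA => table_map f sz xA)).
Qed.

Lemma is_hom_table_comp A B T l f :
  is_hom_table A B l -> is_homfun B T f -> is_hom_table A T (map f l).
Proof.
by case/andP => /eqP sz hAB fBT; apply: is_hom_table_post sz (is_homfun_comp hAB fBT).
Qed.

Definition hom_tables A B : seq (seq nat) :=
  [seq map (ext g) (adom A) | g <- enum [pred g : {ffun adomT A -> adomT B} | is_hom g]].

Lemma ext_val A B (g : {ffun adomT A -> adomT B}) (x : adomT A) : ext g (val x) = val (g x).
Proof. by rewrite /ext valK. Qed.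

Lemma size_hom_tables A B : size (hom_tables A B) = homN A B.
Proof. by rewrite size_map /homN cardE. Qed.

Lemma uniq_hom_tables A B : uniq (hom_tables A B).
Proof.
rewrite map_inj_uniq ?enum_uniq // => g1 g2 /eq_in_map e12.
by apply/ffunP => x; apply: val_inj; rewrite -!ext_val; apply/e12/valP.
Qed.

Lemma mem_hom_tables A B l : (l \in hom_tables A B) = is_hom_table A B l.
Proof.
apply/mapP/idP => [[g]|/andP [/eqP sz hAB]].
  by rewrite mem_enum inE is_hom_ext => /is_hom_table_fun hAB ->.
have table_adom (x : adomT A) : table A l (val x) \in adom B.
  by apply: is_homfun_adom hAB _; apply: valP.
pose g := [ffun x => SeqSub (table_adom x)].
have ext_g : {in adom A, ext g =1 table A l}.
  by move=> x xA; rewrite -[x]/(val (SeqSub xA : adomT A)) ext_val ffunE.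
exists g; first by rewrite mem_enum inE is_hom_ext (eq_is_homfun _ ext_g).
by rewrite -{1}(map_table sz); apply/eq_in_map => x /ext_g.
Qed.

Lemma homN_count A B (l : seq (seq nat)) :
  uniq l -> (forall t, (t \in l) = is_hom_table A B t) -> homN A B = size l.
Proof.
move=> ul ml; rewrite -size_hom_tables; apply/perm_size/uniq_perm => //.
  exact: uniq_hom_tables.
by move=> t; rewrite mem_hom_tables ml.
Qed.

Lemma homB_homN A B : homB A B = (0 < homN A B).
Proof. by apply/existsP/card_gt0P => [[g hg]|[g hg]]; exists g. Qed.

Lemma homB_homfun A B : homB A B <-> exists h, is_homfun A B h.
Proof.
split=> [/existsP [g]|[h /is_hom_table_fun]]; first by rewrite is_hom_ext; exists (ext g).
by rewrite homB_homN -size_hom_tables -mem_hom_tables; case: hom_tables.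
Qed.

Lemma homB_refl A : homB A A.
Proof. by apply/homB_homfun; exists id; apply: is_homfun_id. Qed.

Lemma homB_trans A B T : homB A B -> homB B T -> homB A T.
Proof.
move=> /homB_homfun [h hAB] /homB_homfun [k kBT]; apply/homB_homfun.
by exists (k \o h); apply: is_homfun_comp hAB kBT.
Qed.

End Homomorphisms.

Section Constructions.
Variable s : schema.
Implicit Types A B F T X Y : instance s.

Definition mk_fact (R : sym s) (l : seq nat) : fact s :=
  existT (fun R => (arity R).-tuple nat) R (insubd (nseq_tuple (arity R) 0) l).

Definition inst_of (ps : seq (sym s * seq nat)) : instance s :=
  Instance [seq mk_fact p.1 p.2 | p <- ps].

Lemma raw_facts_inst_of ps : all (fun p => size p.2 == arity p.1) ps ->
  raw_facts (inst_of ps) = ps.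
Proof.
move=> /allP ok; rewrite /raw_facts /inst_of -map_comp -[RHS]map_id.
by apply/eq_in_map => -[R l] /ok /eqP sz; rewrite /raw_fact /= val_insubd /= sz eqxx.
Qed.

(* Disjoint union: elements of X are coded by even, those of Y by odd numbers. *)
Definition lcode (n : nat) : nat := n.*2.
Definition rcode (n : nat) : nat := n.*2.+1.

Definition inst_sum X Y : instance s := inst_of
  ([seq (p.1, map lcode p.2) | p <- raw_facts X] ++ [seq (p.1, map rcode p.2) | p <- raw_facts Y]).

(* Direct product: a pair of elements is coded by pickling. *)
Definition zip_code (l1 l2 : seq nat) : seq nat := map pickle (zip l1 l2).
Definition fst_code (n : nat) : nat := (odflt (0, 0) (unpickle n)).1.
Definition snd_code (n : nat) : nat := (odflt (0, 0) (unpickle n)).2.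

Definition inst_prod X Y : instance s := inst_of
  [seq (p.1, zip_code p.2 q.2) | p <- raw_facts X, q <- [seq q <- raw_facts Y | q.1 == p.1]].

Definition inst_empty : instance s := Instance [::].

Lemma raw_facts_sum X Y : raw_facts (inst_sum X Y) =
  [seq (p.1, map lcode p.2) | p <- raw_facts X] ++ [seq (p.1, map rcode p.2) | p <- raw_facts Y].
Proof.
apply: raw_facts_inst_of; apply/allP => z; rewrite mem_cat.
by case/orP => /mapP [p pX ->]; rewrite /= size_map (raw_facts_arity pX).
Qed.

Lemma raw_facts_prod X Y : raw_facts (inst_prod X Y) =
  [seq (p.1, zip_code p.2 q.2) | p <- raw_facts X, q <- [seq q <- raw_facts Y | q.1 == p.1]].
Proof.
apply: raw_facts_inst_of; apply/allP => z /allpairsPdep [p [q [pX]]].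
rewrite mem_filter => /andP [/eqP eR qY] -> /=.
by rewrite size_map size_zip (raw_facts_arity pX) (raw_facts_arity qY) eR minnn.
Qed.

Lemma map_fst_code l1 l2 : size l1 = size l2 -> map fst_code (zip_code l1 l2) = l1.
Proof.
move=> sz; rewrite -map_comp (@eq_map _ _ _ fst); last by move=> z; rewrite /= /fst_code pickleK.
by rewrite -/(unzip1 _) unzip1_zip // sz.
Qed.

Lemma map_snd_code l1 l2 : size l1 = size l2 -> map snd_code (zip_code l1 l2) = l2.
Proof.
move=> sz; rewrite -map_comp (@eq_map _ _ _ snd); last by move=> z; rewrite /= /snd_code pickleK.
by rewrite -/(unzip2 _) unzip2_zip // sz.
Qed.

Lemma is_homfun_lcode X Y : is_homfun X (inst_sum X Y) lcode.
Proof. by apply/is_homfunP => p pX; rewrite raw_facts_sum mem_cat map_f. Qed.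

Lemma is_homfun_rcode X Y : is_homfun Y (inst_sum X Y) rcode.
Proof. by apply/is_homfunP => p pY; rewrite raw_facts_sum mem_cat map_f ?orbT. Qed.

Lemma is_homfun_copair X Y T hx hy : is_homfun X T hx -> is_homfun Y T hy ->
  is_homfun (inst_sum X Y) T (fun n => if odd n then hy n./2 else hx n./2).
Proof.
move=> /is_homfunP hX /is_homfunP hY; apply/is_homfunP => z.
rewrite raw_facts_sum mem_cat => /orP [] /mapP [p pXY ->] /=; rewrite -map_comp.
  by rewrite (@eq_map _ _ _ hx) ?hX // => n; rewrite /= /lcode odd_double doubleK.
by rewrite (@eq_map _ _ _ hy) ?hY // => n; rewrite /= /rcode odd_double uphalf_double.
Qed.

Lemma is_homfun_fst X Y : is_homfun (inst_prod X Y) X fst_code.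
Proof.
apply/is_homfunP => z; rewrite raw_facts_prod => /allpairsPdep [p [q [pX]]].
rewrite mem_filter => /andP [/eqP eR qY] -> /=.
by rewrite map_fst_code ?(raw_facts_arity pX) ?(raw_facts_arity qY) ?eR // -surjective_pairing.
Qed.

Lemma is_homfun_snd X Y : is_homfun (inst_prod X Y) Y snd_code.
Proof.
apply/is_homfunP => z; rewrite raw_facts_prod => /allpairsPdep [p [q [pX]]].
rewrite mem_filter => /andP [/eqP eR qY] -> /=.
by rewrite map_snd_code ?(raw_facts_arity pX) ?(raw_facts_arity qY) ?eR // -eR -surjective_pairing.
Qed.

Lemma is_homfun_pair A X Y h1 h2 : is_homfun A X h1 -> is_homfun A Y h2 ->
  is_homfun A (inst_prod X Y) (fun x => pickle (h1 x, h2 x)).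
Proof.
move=> /is_homfunP hX /is_homfunP hY; apply/is_homfunP => p pA; rewrite raw_facts_prod.
have -> : map (fun x => pickle (h1 x, h2 x)) p.2 = zip_code (map h1 p.2) (map h2 p.2).
  by rewrite /zip_code zip_map -map_comp.
apply/allpairsPdep; exists (p.1, map h1 p.2), (p.1, map h2 p.2).
by rewrite mem_filter eqxx hX ?hY.
Qed.

Lemma pickle_codes X Y n : n \in adom (inst_prod X Y) -> pickle (fst_code n, snd_code n) = n.
Proof.
rewrite mem_adom => /hasP [q]; rewrite raw_facts_prod => /allpairsPdep [p [r [_ _ ->]]] /=.
by case/mapP => z _ ->; rewrite /fst_code /snd_code pickleK -surjective_pairing.
Qed.

Lemma homB_sumL X Y : homB X (inst_sum X Y).
Proof. by apply/homB_homfun; exists lcode; apply: is_homfun_lcode. Qed.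

Lemma homB_sum_src X Y T : homB X T -> homB Y T -> homB (inst_sum X Y) T.
Proof.
move=> /homB_homfun [h hX] /homB_homfun [k kY]; apply/homB_homfun.
by eexists; apply: is_homfun_copair hX kY.
Qed.

Lemma homB_prodL X Y T : homB X T -> homB (inst_prod X Y) T.
Proof. by apply: homB_trans; apply/homB_homfun; exists fst_code; apply: is_homfun_fst. Qed.

Lemma homB_prodR X Y T : homB Y T -> homB (inst_prod X Y) T.
Proof. by apply: homB_trans; apply/homB_homfun; exists snd_code; apply: is_homfun_snd. Qed.

Lemma homB_empty T : homB inst_empty T.
Proof. by apply/homB_homfun; exists id. Qed.

End Constructions.

Section Counting.
Variable s : schema.
Implicit Types A B F T X Y : instance s.

(* Facts have at least one element, so an instance without elements has no
   fact. *)
Lemma raw_facts_nil A : adom A = [::] -> raw_facts A = [::].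
Proof.
case E: (raw_facts A) => [|p l] // adom0.
have pA : p \in raw_facts A by rewrite E mem_head.
have [x xp] := raw_fact_nonempty pA.
by have := raw_facts_adom pA xp; rewrite adom0.
Qed.

Lemma homN_empty_src A B : adom A = [::] -> homN A B = 1.
Proof.
move=> adom0; rewrite (@homN_count _ A B [:: [::]]) // => t.
by rewrite /is_hom_table /is_homfun (raw_facts_nil adom0) adom0 inE andbT; case: t.
Qed.

Lemma homN_empty_tgt A : adom A != [::] -> homN A (inst_empty s) = 0.
Proof.
move=> adomN0; rewrite (@homN_count _ A _ [::]) // => t.
rewrite /is_hom_table /is_homfun; case E: (raw_facts A) => [|p l] /=; last by rewrite andbF.
by move: adomN0; rewrite /adom /raw_facts in E *; case: (facts A) E.
Qed.

(* hom(F, X x Y) = hom(F, X) * hom(F, Y): homomorphisms into a product are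
   exactly the pairs of homomorphisms into the factors. *)
Lemma homN_prod F X Y : homN F (inst_prod X Y) = homN F X * homN F Y.
Proof.
rewrite -[homN F X]size_hom_tables -[homN F Y]size_hom_tables -(size_allpairs zip_code).
apply: homN_count.
  apply: allpairs_uniq; rewrite ?uniq_hom_tables //.
  move=> [t1 t2] [u1 u2] /allpairsP [[a1 a2] [+ + [-> ->]]] /allpairsP [[b1 b2] [+ + [-> ->]]] /=.
  rewrite !mem_hom_tables => /is_hom_table_size sa1 /is_hom_table_size sa2.
  move=> /is_hom_table_size sb1 /is_hom_table_size sb2 e.
  have sa : size a1 = size a2 by rewrite sa1 sa2.
  have sb : size b1 = size b2 by rewrite sb1 sb2.
  congr pair; first by rewrite -(map_fst_code sa) e map_fst_code.
  by rewrite -(map_snd_code sa) e map_snd_code.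
move=> t; apply/allpairsP/idP => [[[t1 t2] [+ + ->]]|tF].
  rewrite /= !mem_hom_tables => /andP [/eqP s1 h1] /andP [/eqP s2 h2].
  rewrite /is_hom_table size_map size_zip s1 s2 minnn eqxx /=.
  rewrite (@eq_is_homfun _ _ _ _ (fun x => pickle (table F t1 x, table F t2 x))).
    exact: is_homfun_pair.
  move=> x xF; rewrite /table /zip_code (nth_map (0, 0)) ?nth_zip ?s1 ?s2 //.
  by rewrite size_zip s1 s2 minnn index_mem.
have sz := is_hom_table_size tF.
exists (map fst_code t, map snd_code t); rewrite !mem_hom_tables.
split; [exact: is_hom_table_comp tF (is_homfun_fst _ _)
       |exact: is_hom_table_comp tF (is_homfun_snd _ _)|].
rewrite /zip_code zip_map -map_comp -[LHS]map_id; apply/eq_in_map => n /= nt.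
apply/esym/pickle_codes; move: nt; rewrite -(map_table sz) => /mapP [x xF ->].
by case/andP: tF => _ /is_homfun_adom; apply.
Qed.

Lemma sum_fact_parity X Y q m n :
  q \in raw_facts (inst_sum X Y) -> m \in q.2 -> n \in q.2 -> odd m = odd n.
Proof.
rewrite raw_facts_sum mem_cat => /orP [] /mapP [r _ ->] /= /mapP [a _ ->] /mapP [b _ ->];
by rewrite /lcode /rcode /= !odd_double.
Qed.

(* Hence a homomorphism from a connected instance into a disjoint union
   lands entirely in one summand... *)
Lemma hom_sum_parity F X Y h x y : connected F -> is_homfun F (inst_sum X Y) h ->
  x \in adom F -> y \in adom F -> odd (h x) = odd (h y).
Proof.
move=> cF /is_homfunP hF xF yF.
apply: (@closed_connect _ (@share_fact s F) [pred z : adomT F | odd (h (val z))] _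
          (SeqSub xF) (SeqSub yF) (cF _ _)) => u v /hasP [f fF /andP [uf vf]].
by apply: (sum_fact_parity (hF _ (map_f _ fF))); apply: map_f.
Qed.

Lemma hom_sum_factor F X Y h (b : bool) : is_homfun F (inst_sum X Y) h ->
  (forall x, x \in adom F -> odd (h x) = b) -> is_homfun F (if b then Y else X) (half \o h).
Proof.
move=> /is_homfunP hF parity; apply/is_homfunP => p pF.
have [x xp] := raw_fact_nonempty pF.
rewrite map_comp; have := parity x (raw_facts_adom pF xp); have := map_f h xp.
move: (hF p pF); rewrite raw_facts_sum mem_cat.
case/orP => /mapP [r rZ [-> ->]] /mapP [n _ ->];
  rewrite /lcode /rcode /= odd_double => <-; rewrite -map_comp.
  by rewrite (@eq_map _ _ _ id) ?map_id -?surjective_pairing // => k; rewrite /= doubleK.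
by rewrite (@eq_map _ _ _ id) ?map_id -?surjective_pairing // => k; rewrite /= uphalf_double.
Qed.

Lemma homN_sum F X Y : connected F -> adom F != [::] ->
  homN F (inst_sum X Y) = homN F X + homN F Y.
Proof.
move=> cF adomN0; have [x0 x0F] : exists x0, x0 \in adom F.
  by case: (adom F) adomN0 => // x l _; exists x; rewrite mem_head.
rewrite -[homN F X]size_hom_tables -[homN F Y]size_hom_tables.
rewrite -(size_map (map lcode)) -(size_map (map rcode) (hom_tables F Y)) -size_cat.
apply: homN_count.
  have lcode_inj : injective lcode by apply: double_inj.
  have rcode_inj : injective rcode by move=> m n [] /double_inj.
  rewrite cat_uniq (map_inj_uniq (inj_map lcode_inj)) (map_inj_uniq (inj_map rcode_inj)).
  rewrite !uniq_hom_tables andbT /=.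
  apply/hasPn => t /mapP [u uY ->]; apply/negP => /mapP [v vX].
  move: uY vX; rewrite !mem_hom_tables => /is_hom_table_size su /is_hom_table_size sv.
  case: u v su sv => [|a u] [|b v] su sv; try by move: adomN0; rewrite -size_eq0 -?su -?sv.
  by case=> /(congr1 odd); rewrite /lcode /rcode /= !odd_double.
move=> t; rewrite mem_cat; apply/idP/idP.
  case/orP => /mapP [u]; rewrite mem_hom_tables => tu ->.
    exact: is_hom_table_comp tu (is_homfun_lcode _ _).
  exact: is_hom_table_comp tu (is_homfun_rcode _ _).
case/andP => /eqP sz tF; pose b := odd (table F t x0).
have parity x : x \in adom F -> odd (table F t x) = b.
  by move=> xF; apply: hom_sum_parity tF xF x0F.
have halves : is_hom_table F (if b then Y else X) (map half t).
  exact: is_hom_table_post sz (hom_sum_factor tF parity).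
have tE : t = map (if b then rcode else lcode) (map half t).
  rewrite -map_comp -{1}(map_table sz) -[in RHS](map_table sz) -map_comp.
  apply/eq_in_map => x xF /=; rewrite -[LHS]odd_double_half parity //.
  by case: (b); rewrite /rcode /lcode /= ?add1n.
rewrite -mem_hom_tables in halves; rewrite tE.
by case: (b) halves => halves; apply/orP; [right|left]; apply: (map_f _ halves).
Qed.

End Counting.

Section TermInstances.
Variables (s : schema) (D D' : instance s).

Fixpoint term_inst (t : term) : instance s :=
  match t with
  | Tzero => inst_empty s | Tab => inst_prod D D' | Ta => D | Tb => D'
  | Tadd t1 t2 => inst_sum (term_inst t1) (term_inst t2)
  | Tmul t1 t2 => inst_prod (term_inst t1) (term_inst t2)
  end.

Lemma homN_term_inst F t : connected F -> adom F != [::] ->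
  homN F (term_inst t) = teval (homN F D) (homN F D') t.
Proof.
move=> cF adomN0; elim: t => //= [||t1 IH1 t2 IH2|t1 IH1 t2 IH2].
- exact: homN_empty_tgt.
- exact: homN_prod.
- by rewrite homN_sum // IH1 IH2.
by rewrite homN_prod IH1 IH2.
Qed.

Lemma homB_ab_multiple t T : ab_multiple t -> homB D T \/ homB D' T -> homB (term_inst t) T.
Proof.
move=> + DT; elim: t => //= [||t1 IH1 t2 IH2|t1 IH1 t2 IH2].
- by move=> _; apply: homB_empty.
- by move=> _; case: DT; [apply: homB_prodL | apply: homB_prodR].
- by case/andP => /IH1 ? /IH2 ?; apply: homB_sum_src.
by case/orP => [/IH1 ?|/IH2 ?]; [apply: homB_prodL | apply: homB_prodR].
Qed.

Lemma homB_tscale n t T : homB (term_inst t) T -> homB (term_inst (tscale n t)) T.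
Proof. by move=> tT; elim: n => [|n IH] /=; [apply: homB_empty | apply: homB_sum_src]. Qed.

(* v + L v + U(D, D') is homomorphically equivalent to v when U is an
   ab-multiple and v receives D or D': it contains v and maps back into v
   summand by summand. *)
Lemma hom_equiv_padded v L U : ab_multiple U -> homB D (term_inst v) \/ homB D' (term_inst v) ->
  hom_equiv (term_inst v) (term_inst (Tadd (tscale L.+1 v) U)).
Proof.
move=> abU recv; split; first by apply: homB_trans (homB_sumL _ _); apply: homB_sumL.
have scaled_v : homB (term_inst (tscale L.+1 v)) (term_inst v) by apply/homB_tscale/homB_refl.
exact: homB_sum_src scaled_v (homB_ab_multiple abU recv).
Qed.

End TermInstances.

Section LeftQueryAlgorithms.
Variable s : schema.
Implicit Types D : instance s.

Lemma homB_vecE (F : seq (instance s)) D : homB_vec F D = [seq 0 < n | n <- homN_vec F D].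
Proof. by rewrite -map_comp; apply: eq_map => Fi; rewrite /= homB_homN. Qed.

Lemma equalize_counts (F : seq (instance s)) D D' : List.Forall (@connected s) F ->
  homB_vec F D = homB_vec F D' ->
  exists G G', [/\ hom_equiv D G, hom_equiv D' G' & homN_vec F G = homN_vec F G'].
Proof.
move=> cF eqB; pose pts := [seq (homN Fi D, homN Fi D') | Fi <- F].
have zero_iff p : p \in pts -> (p.1 == 0) = (p.2 == 0).
  move: eqB; rewrite /pts !homB_vecE; elim: F {cF pts} => //= Fi F IH [eFi eqF].
  by rewrite inE => /orP [/eqP -> | /(IH eqF)] //=; rewrite !eqn0Ngt eFi.
have [[|L] [U [W [//= _ abU abW eqN]]]] := equalizing_terms zero_iff.
exists (term_inst D D' (Tadd (tscale L.+1 Ta) U)), (term_inst D D' (Tadd (tscale L.+1 Tb) W)).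
split; [exact: (@hom_equiv_padded _ D D' Ta L U abU (or_introl (homB_refl D)))
       |exact: (@hom_equiv_padded _ D D' Tb L W abW (or_intror (homB_refl D')))|].
(* For each F_i the counts are the two sides of the identity solved by U, W;
   an F_i without elements has exactly one homomorphism into anything. *)
move: eqN; rewrite /homN_vec /pts; clear zero_iff pts eqB.
elim: F cF => // Fi F IH /List.Forall_cons_iff [cFi cF] eqN.
congr cons; last by apply: IH => // p pF; apply: eqN; rewrite inE pF orbT.
have [adom0 | adomN0] := eqVneq (adom Fi) [::]; first by rewrite !homN_empty_src.
rewrite !homN_term_inst //= !teval_tscale.
by have := eqN _ (mem_head _ _).
Qed.

End LeftQueryAlgorithms.

Theorem mainTheorem10 (s : schema) (C : instance s -> Prop)
  (HC : closed_hom_equiv C) (F : seq (instance s))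
  (HF : List.Forall (@connected s) F) :
  (exists X : seq nat -> Prop, left_qa_N C F X) <->
  (exists X' : seq bool -> Prop, left_qa_B C F X').
Proof.
split=> [[X qaN] | [X' qaB]].
  exists (fun bv => exists D0, C D0 /\ homB_vec F D0 = bv) => D.
  split=> [CD | [D0 [CD0 eqB]]]; first by exists D.
  have [G [G' [[D0G GD0] [DG' G'D] eqN]]] := equalize_counts HF eqB.
  have CG' : C G' by apply/qaN; rewrite -eqN; apply/qaN/(HC D0).
  exact: HC CG' _.
exists (fun v => X' [seq 0 < n | n <- v]) => D.
by rewrite qaB homB_vecE.
Qed.
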